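(* Let $G$ be a finite group with $|G|\ge3$. Then $\mathsf D(G)\le\omega(G)$, and equality holds if $G$ is abelian.
   Context: For a finite group $G$ (multiplicative, identity $1_G$), $\mathcal F(G)$ is the free abelian monoid with basis $G$ (sequences $S=g_1\boldsymbol{\cdot}\ldots\boldsymbol{\cdot}g_\ell$, operation $\boldsymbol{\cdot}$, length $|S|=\ell$). $\pi(S)=\{g_{\tau(1)}\cdots g_{\tau(\ell)}:\tau\text{ a permutation of }[1,\ell]\}$, $\mathcal B(G)=\{S\in\mathcal F(G):1_G\in\pi(S)\}$, $\mathcal A(G)$ its set of atoms, and $\mathsf D(G)=\max\{|U|:U\in\mathcal A(G)\}$. For an atomic monoid $H$ and $b\in H$, $\omega(H,b)$ is the smallest $N\in\mathbb N_0\cup\{\infty\}$ such that for all $n\in\mathbb N$ and $a_1,\dots,a_n\in H$ with $b\mid a_1\cdots a_n$ (in $H$), there is $\Omega\subset[1,n]$ with $|\Omega|\le N$ and $b\mid\prod_{\nu\in\Omega}a_\nu$ (in $H$). $\omega(H)=\sup\{\omega(H,u):u\in\mathcal A(H)\}$, and $\omega(G)=\omega(\mathcal B(G))$. *)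

From HB Require Import structures.
From mathcomp Require Import all_boot all_order all_fingroup.
From Stdlib Require Import ClassicalEpsilon.
Set Implicit Arguments. Unset Strict Implicit. Unset Printing Implicit Defensive.

(* Extended naturals N_0 \cup {oo}: [None] is infinity. *)
Definition enat := option nat.

Definition ele (x y : enat) : Prop :=
  match y with
  | None => True
  | Some m => match x with None => False | Some n => (n <= m)%N end
  end.

Definition is_esup (P : enat -> Prop) (s : enat) : Prop :=
  (forall x, P x -> ele x s) /\ (forall y, (forall x, P x -> ele x y) -> ele s y).
Definition esup (P : enat -> Prop) : enat := epsilon (inhabits None) (is_esup P).

Definition is_emin (P : enat -> Prop) (s : enat) : Prop :=
  P s /\ (forall y, P y -> ele s y).
Definition emin (P : enat -> Prop) : enat := epsilon (inhabits None) (is_emin P).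

Section BG.
Variable gT : finGroupType.
Local Open Scope group_scope.

(* Sequences over G: elements of F(G) are represented by [seq gT], taken up
   to permutation ([perm_eq]); the monoid operation is concatenation. *)

Definition seq_pi (S : seq gT) : {set gT} :=
  [set:: [seq (\prod_(x <- s) x) | s <- permutations S]].

Definition zs (S : seq gT) : Prop := 1 \in seq_pi S.

Definition bdvd (a b : seq gT) : Prop :=
  exists c, zs c /\ perm_eq b (a ++ c).

Definition bunit (a : seq gT) : Prop :=
  zs a /\ exists c, zs c /\ perm_eq (a ++ c) [::].

Definition batom (u : seq gT) : Prop :=
  zs u /\ ~ bunit u /\
  forall a c, zs a -> zs c -> perm_eq u (a ++ c) -> bunit a \/ bunit c.

Definition Davenport : enat :=
  esup (fun x => exists U, batom U /\ x = Some (size U)).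

Definition omega_prop (b : seq gT) (N : nat) : Prop :=
  forall (as_ : seq (seq gT)), (0 < size as_)%N -> (forall a, a \in as_ -> zs a) ->
    bdvd b (flatten as_) ->
    exists m : bitseq, size m = size as_ /\ (count id m <= N)%N /\
      bdvd b (flatten (mask m as_)).

Definition omega_elt (b : seq gT) : enat :=
  emin (fun x => match x with None => True | Some N => omega_prop b N end).

Definition omega_G : enat :=
  esup (fun x => exists u, batom u /\ x = omega_elt u).

End BG.

From HB Require Import structures.
From mathcomp Require Import all_boot all_order all_fingroup.
From Stdlib Require Import ClassicalEpsilon Wf_nat.
Set Implicit Arguments. Unset Strict Implicit. Unset Printing Implicit Defensive.

(* Lower bound: an atom U = g_1 ... g_l divides the product of the l zero-sum
   pairs g_i g_i^-1.  If U divided a subproduct omitting the pair of some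
   term b, comparing multisets would give U = (b b^-1) V with V zero-sum,
   which for an atom forces U = b b^-1.  Hence omega(U) >= |U| when |U| <> 2;
   as |G| >= 3 there is an atom of length 3, which also dominates the atoms
   of length at most 2.
   Upper bound for abelian G: being zero-sum depends only on the multiset, so
   if U divides a_1 ... a_n, it divides the product of at most |U| factors,
   one chosen for each term of U. *)

Lemma ex_least_nat (P : nat -> Prop) :
  (exists n, P n) -> exists n, P n /\ forall m, P m -> n <= m.
Proof.
move=> exP; have [n [[Pn n_min] _]] :=
  dec_inh_nat_subset_has_unique_least_element P (fun n => classic (P n)) exP.
by exists n; split=> // m /n_min /leP.
Qed.

Lemma ele_trans x y z : ele x y -> ele y z -> ele x z.
Proof. by case: z => [n|] //; case: y => [m|] //; case: x => [k|] //=; apply: leq_trans. Qed.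

Lemma ele_anti x y : ele x y -> ele y x -> x = y.
Proof. by case: x => [n|]; case: y => [m|] //= le_nm le_mn; congr Some; apply/anti_leq/andP. Qed.

Lemma esupP (P : enat -> Prop) : is_esup P (esup P).
Proof.
apply: epsilon_spec.
have [[n ub_n]|unbounded] := classic (exists n, forall x, P x -> ele x (Some n)).
  pose ub k := forall x, P x -> ele x (Some k).
  have [m [ub_m m_min]] := ex_least_nat (ex_intro ub n ub_n).
  by exists (Some m); split=> // -[k|] // /m_min.
by exists None; split=> // -[k|] // ub_k; case: unbounded; exists k.
Qed.

Lemma esup_ub (P : enat -> Prop) x : P x -> ele x (esup P).
Proof. by have [ub _] := esupP P; apply: ub. Qed.

Lemma esup_least (P : enat -> Prop) y : (forall x, P x -> ele x y) -> ele (esup P) y.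
Proof. by have [_ least] := esupP P; apply: least. Qed.

Lemma eminP (P : enat -> Prop) : P None -> is_emin P (emin P).
Proof.
move=> P_oo; apply: epsilon_spec.
have [[n Pn]|noP] := classic (exists n, P (Some n)).
  have [m [Pm m_min]] := ex_least_nat (ex_intro (fun n => P (Some n)) n Pn).
  by exists (Some m); split=> // -[k|] // /m_min.
by exists None; split=> // -[k|] // Pk; case: noP; exists k.
Qed.

Section SeqCover.
Variable T : eqType.
Implicit Types (s t : seq T) (L : seq (seq T)).

Definition remseq s t := foldl (fun s y => rem y s) s t.

Lemma count_mem_remseq x s t : count_mem x (remseq s t) = count_mem x s - count_mem x t.
Proof.
elim: t s => [|y t IHt] s /=; first by rewrite subn0.
by rewrite IHt count_mem_rem subnDA.
Qed.

Lemma remseq_subseq s t : subseq (remseq s t) s.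
Proof.
elim: t s => [|y t IHt] s //=.
exact: subseq_trans (IHt _) (rem_subseq _ _).
Qed.

Lemma perm_cat_count_le s t :
  (forall x, count_mem x s <= count_mem x t) -> exists c, perm_eq t (s ++ c).
Proof.
case/count_subseqP=> s' /perm_to_subseq[c perm_t] perm_s.
by exists c; rewrite (permPl perm_t) perm_cat2r perm_sym.
Qed.

Lemma perm_mask_cat (m : bitseq) s :
  size m = size s -> perm_eq s (mask m s ++ mask (map negb m) s).
Proof.
elim: s m => [|x s IHs] [|[] m] //= [/IHs perm_s].
  by rewrite perm_cons.
rewrite -(perm_cons x) in perm_s.
by rewrite (permPl perm_s) perm_sym -cat1s perm_catCA.
Qed.

(* Greedy choice: keep a factor only if it removes something still missing. *)
Lemma mask_cover L s :
  (forall x, count_mem x s <= count_mem x (flatten L)) ->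
  exists m : bitseq, [/\ size m = size L, count id m <= size s &
    forall x, count_mem x s <= count_mem x (flatten (mask m L))].
Proof.
elim: L s => [|a L IHL] s s_le; first by exists [::].
set s' := remseq s a.
have s'_le x : count_mem x s' <= count_mem x (flatten L).
  by rewrite count_mem_remseq leq_subLR -count_cat; apply: s_le.
have [m [size_m count_m cover_m]] := IHL _ s'_le.
have [s'_eq|s'_neq] := eqVneq s' s.
  by rewrite s'_eq in count_m cover_m; exists (false :: m); split=> //=; rewrite size_m.
have lt_s' : size s' < size s by rewrite (ltn_leqif (size_subseq_leqif (remseq_subseq _ _))).
exists (true :: m); split=> /=; [by rewrite size_m | exact: leq_ltn_trans count_m lt_s' |].
move=> x; rewrite count_cat -leq_subLR -count_mem_remseq; exact: cover_m.
Qed.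

End SeqCover.

Lemma setC_nonempty (T : finType) (A : {set T}) : #|A| < #|T| -> exists x, x \in ~: A.
Proof. by move=> ltAT; apply/set0Pn; rewrite -card_gt0 -(ltn_add2l #|A|) addn0 cardsC. Qed.

Section ZeroSum.
Variable gT : finGroupType.
Local Open Scope group_scope.
Implicit Types (s t U r : seq gT) (b g : gT).

Lemma zsP s : zs s <-> exists2 t, perm_eq t s & \prod_(x <- t) x = 1.
Proof.
rewrite /zs /seq_pi inE; split.
  by case/mapP=> t; rewrite mem_permutations => perm_t prod_t; exists t.
by case=> t perm_t prod_t; apply/mapP; exists t; rewrite ?mem_permutations.
Qed.

Lemma zs_nil : zs ([::] : seq gT).
Proof. by apply/zsP; exists [::]; rewrite ?big_nil. Qed.

Lemma zs_cat s t : zs s -> zs t -> zs (s ++ t).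
Proof.
move=> /zsP[u perm_u prod_u] /zsP[v perm_v prod_v].
by apply/zsP; exists (u ++ v); rewrite ?perm_cat // big_cat /= prod_u prod_v mulg1.
Qed.

Lemma zs_flatten (L : seq (seq gT)) : (forall a, a \in L -> zs a) -> zs (flatten L).
Proof.
elim: L => [|a L IHL] zs_L /=; first exact: zs_nil.
apply: zs_cat; first by apply: zs_L; rewrite mem_head.
by apply: IHL => b L_b; apply: zs_L; rewrite inE L_b orbT.
Qed.

Lemma prodg_rev_inv s :
  \prod_(x <- rev [seq g^-1 | g <- s]) x = (\prod_(x <- s) x)^-1.
Proof.
elim: s => [|x s IHs]; first by rewrite !big_nil invg1.
by rewrite /= rev_cons -cats1 big_cat /= IHs big_seq1 big_cons invMg.
Qed.

Lemma zs_inv s : zs s -> zs [seq g^-1 | g <- s].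
Proof.
move=> /zsP[t perm_t prod_t]; apply/zsP; exists (rev [seq g^-1 | g <- t]).
  by rewrite perm_rev perm_map.
by rewrite prodg_rev_inv prod_t invg1.
Qed.

Lemma zs_pair g : zs [:: g; g^-1].
Proof. by apply/zsP; exists [:: g; g^-1]; rewrite // big_cons big_seq1 mulgV. Qed.

Lemma zs_seq1 g : zs [:: g] -> g = 1.
Proof.
case/zsP=> -[|x [|y t]] perm_t; have := perm_size perm_t => //= _.
rewrite big_seq1 => <-.
by have := perm_mem perm_t x; rewrite !mem_seq1 eqxx => /esym/eqP ->.
Qed.

Lemma bunitP s : bunit s <-> s = [::].
Proof.
split; first by case=> _ [c [_ /perm_size]]; rewrite size_cat; case: s.
by move->; split; [exact: zs_nil | exists [::]; split; [exact: zs_nil |]].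
Qed.

Lemma batom_small s : zs s -> 1 \notin s -> 0 < size s <= 3 -> batom s.
Proof.
move=> zs_s s'1 /andP[s_gt0 s_le3]; split=> //; split.
  by move/bunitP=> s0; rewrite s0 in s_gt0.
have long (a : seq gT) : zs a -> 1 \notin a -> a = [::] \/ 2 <= size a.
  case: a => [|x [|y a]] zs_a a'1; [by left | | by right].
  by rewrite (zs_seq1 zs_a) mem_head in a'1.
move=> a c zs_a zs_c perm_s; rewrite !bunitP.
have [a'1 c'1] : 1 \notin a /\ 1 \notin c.
  by move: s'1; rewrite (perm_mem perm_s) mem_cat negb_or => /andP.
have [->|a_ge2] := long a zs_a a'1; first by left.
have [->|c_ge2] := long c zs_c c'1; first by right.
by move: s_le3; rewrite (perm_size perm_s) size_cat => /(leq_trans (leq_add a_ge2 c_ge2)).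
Qed.

Lemma exists_batom3 : 3 <= #|gT| -> exists2 U : seq gT, batom U & size U = 3.
Proof.
move=> gT_ge3.
have [x] : exists x : gT, x \in ~: [set 1].
  by apply: setC_nonempty; rewrite cards1; apply: leq_trans gT_ge3.
have [y] : exists y : gT, y \in ~: [set 1; x^-1].
  by apply: setC_nonempty; apply: leq_trans gT_ge3; rewrite cards2; case: (_ != _).
rewrite !inE negb_or => /andP[y_neq1 y_neq_xV] x_neq1.
have xy_neq1 : x * y != 1 by rewrite -eq_invg_mul eq_sym.
exists [:: x; y; (x * y)^-1] => //; apply: batom_small => //.
  by apply/zsP; exists [:: x; y; (x * y)^-1]; rewrite // !big_cons big_nil mulg1 mulgA mulgV.
by rewrite !inE !negb_or ![1 == _]eq_sym eq_invg1 x_neq1 y_neq1 xy_neq1.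
Qed.

Definition inv_pairs s := flatten [seq [:: g; g^-1] | g <- s].

Lemma perm_inv_pairs s : perm_eq (inv_pairs s) (s ++ [seq g^-1 | g <- s]).
Proof.
elim: s => //= x s IHs; rewrite -cat1s -[x^-1 :: _]cat1s perm_cons perm_sym.
by rewrite perm_catCA perm_cat2l perm_sym.
Qed.

Lemma zs_inv_pairs s : zs (inv_pairs s).
Proof. by apply: zs_flatten => _ /mapP[g _ ->]; exact: zs_pair. Qed.

Lemma batom_pair_size U b r : batom U -> perm_eq U [:: b, b^-1 & r] -> zs r -> size U = 2.
Proof.
case=> _ [_ atom_U] perm_U zs_r.
have [|] := atom_U [:: b; b^-1] r (zs_pair b) zs_r perm_U; move/bunitP => //.
by move=> r0; rewrite (perm_size perm_U) r0.
Qed.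

Lemma size_le_omega_prop U N : batom U -> size U != 2 -> omega_prop U N -> size U <= N.
Proof.
move=> atom_U U_neq2 omega_U; have [zs_U [U_nunit _]] := atom_U.
set L := [seq [:: g; g^-1] | g <- U].
have L_gt0 : 0 < size L.
  by rewrite size_map lt0n size_eq0; apply/eqP => U0; apply: U_nunit; apply/bunitP.
have zs_L a : a \in L -> zs a by case/mapP=> g _ ->; exact: zs_pair.
have U_dvd_L : bdvd U (flatten L).
  by exists [seq g^-1 | g <- U]; split; [exact: zs_inv | exact: perm_inv_pairs].
have [m [size_m [count_m [c [zs_c perm_c]]]]] := omega_U L L_gt0 zs_L U_dvd_L.
rewrite size_map in size_m; rewrite -map_mask -/(inv_pairs _) in perm_c.
set A := mask m U in perm_c; set B := mask (map negb m) U.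
have perm_U : perm_eq U (A ++ B) by apply: perm_mask_cat.
(* U c = A A^-1 and U = A B give A = B^-1 c^-1, so U = B B^-1 c^-1. *)
have perm_A : perm_eq A ([seq g^-1 | g <- B] ++ [seq g^-1 | g <- c]).
  move: perm_c; rewrite (permPl (perm_inv_pairs A)).
  rewrite (permPr (perm_cat perm_U (perm_refl c))) -catA perm_cat2l.
  by move/(perm_map (fun g : gT => g^-1)); rewrite -map_cat mapK //; apply: invgK.
suff B0 : B = [::].
  have sizes : size B + count id m = size U.
    rewrite size_mask ?size_map // count_map addnC -size_m -(count_predC id m).
    by congr (_ + _); apply: eq_count.
  by rewrite -sizes B0 add0n.
have perm_UB : perm_eq U (inv_pairs B ++ [seq g^-1 | g <- c]).
  rewrite (permPl perm_U) (permPl (perm_cat perm_A (perm_refl B))) perm_catC catA.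
  by rewrite perm_cat2r perm_sym perm_inv_pairs.
case: B perm_UB {perm_U perm_A} => [//|b B'] perm_UB.
have zs_r : zs (inv_pairs B' ++ [seq g^-1 | g <- c]).
  exact: zs_cat (zs_inv_pairs _) (zs_inv zs_c).
by rewrite (batom_pair_size atom_U perm_UB zs_r) in U_neq2.
Qed.

Section Abelian.
Hypothesis mulgC : forall x y : gT, commute x y.

(* An alias of the group law on which commutativity can be declared. *)
Definition cmulg (x y : gT) := x * y.
HB.instance Definition _ := SemiGroup.isComLaw.Build gT cmulg (@mulgA gT) mulgC.

Lemma prodg_perm s t : perm_eq s t -> \prod_(x <- s) x = \prod_(x <- t) x.
Proof. exact: (@perm_big _ cmulg). Qed.

Lemma zs_abelianE s : zs s <-> \prod_(x <- s) x = 1.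
Proof.
split; last by move=> prod_s; apply/zsP; exists s.
by case/zsP=> t /prodg_perm <-.
Qed.

Lemma omega_prop_size U : zs U -> omega_prop U (size U).
Proof.
move=> zs_U L _ zs_L [c [_ perm_c]].
have U_le_L x : count_mem x U <= count_mem x (flatten L).
  by rewrite (seq.permP perm_c) count_cat leq_addr.
have [m [size_m count_m cover_m]] := mask_cover U_le_L.
exists m; split=> //; split=> //.
have [c' perm_c'] := perm_cat_count_le cover_m.
exists c'; split=> //; apply/zs_abelianE.
have zs_mask : zs (flatten (mask m L)) by apply: zs_flatten => a /mem_mask; apply: zs_L.
move/zs_abelianE: zs_mask.
by rewrite (prodg_perm perm_c') big_cat /= ((zs_abelianE U).1 zs_U) mul1g.
Qed.

End Abelian.

Let omega_pred U (x : enat) : Prop :=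
  if x is Some N then omega_prop U N else True.

Lemma omega_eltP U : is_emin (omega_pred U) (omega_elt U).
Proof. exact: eminP. Qed.

Lemma size_le_omega_elt U : batom U -> size U != 2 -> ele (Some (size U)) (omega_elt U).
Proof.
move=> atom_U U_neq2; have [+ _] := omega_eltP U.
by case: (omega_elt U) => [N|] //= /(size_le_omega_prop atom_U U_neq2).
Qed.

Lemma omega_elt_le_size U : abelian [set: gT] -> batom U -> ele (omega_elt U) (Some (size U)).
Proof.
move=> /centsP abG [zs_U _]; have [_ omega_least] := omega_eltP U.
by apply: omega_least; apply: omega_prop_size => // x y; apply: abG; rewrite inE.
Qed.

End ZeroSum.

Theorem lemma5p8 (gT : finGroupType) (hG : (3 <= #|gT|)%N) :
  ele (Davenport gT) (omega_G gT) /\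
  (abelian [set: gT] -> Davenport gT = omega_G gT).
Proof.
have omega_ub (U : seq gT) : batom U -> ele (omega_elt U) (omega_G gT).
  by move=> atom_U; apply: esup_ub; exists U.
have [W atom_W size_W] := exists_batom3 hG.
have D_le_omega : ele (Davenport gT) (omega_G gT).
  apply: esup_least => _ [U [atom_U ->]].
  have [U2|U_neq2] := eqVneq (size U) 2.
    apply: (@ele_trans _ (Some (size W))); first by rewrite U2 size_W.
    by apply: ele_trans (omega_ub _ atom_W); apply: size_le_omega_elt; rewrite ?size_W.
  exact: ele_trans (size_le_omega_elt atom_U U_neq2) (omega_ub _ atom_U).
split=> // abG; apply: ele_anti => //.
apply: esup_least => _ [U [atom_U ->]].
by apply: ele_trans (omega_elt_le_size abG atom_U) _; apply: esup_ub; exists U.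
Qed.
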